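(* Let $\mathcal{F}$ be a free filter on $\omega$ and let $\kappa$ be a cardinal with $\omega\le\kappa\le\mathfrak{c}$. Then $C_p(X_{\mathcal{F},\kappa})$ is separable.
   Context: A filter on $\omega$ is free if it contains all cofinite sets. $\mathfrak{c}=2^{\aleph_0}$. $X_{\mathcal{F},\kappa}$ is the space $(\kappa\times\omega)\cup\{\infty\}$ in which every point of $\kappa\times\omega$ is isolated and the neighborhoods of $\infty$ are the sets of the form $\{\infty\}\cup\bigcup\{\{\alpha\}\times A_\alpha:\alpha<\kappa\}$ with $A_\alpha\in\mathcal{F}$ for all $\alpha<\kappa$. $C_p(X)$ is the space of continuous functions $X\to\mathbb{R}$ with the topology of pointwise convergence. *)

From Stdlib Require Import Reals List.
Open Scope R_scope.

Definition cofinite (A : nat -> Prop) : Prop :=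
  exists l : list nat, forall n, ~ In n l -> A n.

Definition is_filter_on_nat (F : (nat -> Prop) -> Prop) : Prop :=
  F (fun _ => True) /\
  ~ F (fun _ => False) /\
  (forall A B : nat -> Prop, F A -> (forall n, A n -> B n) -> F B) /\
  (forall A B : nat -> Prop, F A -> F B -> F (fun n => A n /\ B n)).

Definition free_filter (F : (nat -> Prop) -> Prop) : Prop :=
  is_filter_on_nat F /\ forall A, cofinite A -> F A.

(* The space X_{F,kappa} = (kappa x omega) + {infinity}; the index set kappa is
   represented by a type K; [None] is the point infinity. *)
Definition XFk (K : Type) : Type := option (K * nat).

(* Open sets of X_{F,K}: points of K x omega are isolated; a set containing
   infinity is open iff it contains a basic neighbourhood
   {inf} u U_{a} {a} x A_a with all A_a in F. *)
Definition XFk_open {K : Type} (F : (nat -> Prop) -> Prop)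
  (U : XFk K -> Prop) : Prop :=
  U None ->
  exists A : K -> nat -> Prop,
    (forall a, F (A a)) /\ (forall a n, A a n -> U (Some (a, n))).

Definition XFk_continuous {K : Type} (F : (nat -> Prop) -> Prop)
  (f : XFk K -> R) : Prop :=
  forall V : R -> Prop, open_set V -> XFk_open F (fun x => V (f x)).

Definition Cp_XFk_separable {K : Type} (F : (nat -> Prop) -> Prop) : Prop :=
  exists D : nat -> (XFk K -> R),
    (forall k, XFk_continuous F (D k)) /\
    forall g : XFk K -> R, XFk_continuous F g ->
      forall (S : list (XFk K)) (eps : R), 0 < eps ->
        exists k, forall x, In x S -> Rabs (D k x - g x) < eps.

From Stdlib Require Import Reals List Lra Lia.
From mathcomp Require Import ssreflect ssrfun ssrbool ssrnat eqtype choice seq.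
Open Scope R_scope.

(* Fix an injection j : K -> R.  Consider the functions that equal a rational
   c at infinity and on all but finitely many rows K x {m}, and that on these
   rows take finitely many rational values, on boxes {a | r < j a < s} x {m}
   with r, s rational.  They are coded by finite lists of rationals, hence
   countably many, and they are continuous because a free filter contains the
   cofinite sets.  They are dense in C_p: the j-images of finitely many points
   of K x omega are distinct, so rational intervals separate them, and any
   values at these points and at infinity are approximated at once. *)

Lemma eventually_constant_continuous (K : Type) (F : (nat -> Prop) -> Prop)
    (f : XFk K -> R) :
  free_filter F ->
  (exists M, forall a n, (M < n)%N -> f (Some (a, n)) = f None) ->
  XFk_continuous F f.
Proof.
move=> [_ F_cofinite] [M fM] V _ V_f_inf.
exists (fun _ n => (M < n)%N); split => [a | a n /fM -> //].
apply: F_cofinite; exists (List.seq 0 M.+1) => n n_out.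
rewrite ltnNge; apply/negP => /leP n_le; apply: n_out; apply/in_seq; lia.
Qed.

Definition frac (c : nat * nat * nat) : R :=
  let: (a, b, d) := c in (INR a - INR b) / INR d.+1.

Lemma INR_Z_to_nat_sub (z : Z) : INR (Z.to_nat z) - INR (Z.to_nat (- z)) = IZR z.
Proof. by rewrite !INR_IZR_INZ -minus_IZR; f_equal; lia. Qed.

Lemma frac_dense (x y : R) : x < y -> exists c, x < frac c < y.
Proof.
move=> xy.
have [[|d] [d_small d_pos]] := archimed_cor1 (y - x) ltac:(lra); first by lia.
have [z_gt z_le] := archimed (x * INR d.+1).
exists (Z.to_nat (up (x * INR d.+1)), Z.to_nat (- up (x * INR d.+1)), d) => /=.
rewrite INR_Z_to_nat_sub.
set z := IZR (up _) in z_gt z_le *; set N := INR d.+1 in d_small z_gt z_le *.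
have N_gt0 : 0 < N by apply: lt_0_INR; lia.
have -> : z / N = x + (z - x * N) / N by field; lra.
have gap_pos : 0 < (z - x * N) / N by apply: Rdiv_lt_0_compat; lra.
have gap_small : (z - x * N) / N <= / N.
  rewrite -[/ N]Rmult_1_l; apply: Rmult_le_compat_r => //.
  exact/Rlt_le/Rinv_0_lt_compat.
lra.
Qed.

Definition entry (Q : Type) := (Q * Q * nat * Q)%type.

Section DenseStepFunctions.

Context {Q : countType} (q : Q -> R).
Hypothesis q_dense : forall x y, x < y -> exists c, x < q c < y.

Lemma dense_approx (x : R) {eps : R} : 0 < eps -> exists c, Rabs (q c - x) < eps.
Proof.
move=> eps_gt0.
have [c xc] : exists c, x - eps < q c < x + eps by apply: q_dense; lra.
by exists c; apply: Rabs_def1; lra.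
Qed.

Lemma isolating_interval (y : R) (ys : list R) :
  exists lo hi, q lo < y < q hi /\
    forall y', In y' ys -> q lo < y' < q hi -> y' = y.
Proof.
elim: ys => [|y0 ys [lo [hi [y_in y_iso]]]].
  have [lo lo_y] : exists lo, y - 1 < q lo < y by apply: q_dense; lra.
  have [hi y_hi] : exists hi, y < q hi < y + 1 by apply: q_dense; lra.
  by exists lo, hi; split; [lra | move=> ? []].
case: (total_order_T y0 y) => [[y0_lt | ->] | y0_gt].
- have [lo' lo'_y] : exists lo', Rmax (q lo) y0 < q lo' < y.
    by apply: q_dense; apply: Rmax_lub_lt; lra.
  have [? ?] := (Rmax_l (q lo) y0, Rmax_r (q lo) y0).
  exists lo', hi; split=> [| y' [<- | y'_in] y'_in_box]; try lra.
  by apply: y_iso => //; lra.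
- by exists lo, hi; split=> // y' [-> // | /y_iso].
- have [hi' y_hi'] : exists hi', y < q hi' < Rmin (q hi) y0.
    by apply: q_dense; apply: Rmin_glb_lt; lra.
  have [? ?] := (Rmin_l (q hi) y0, Rmin_r (q hi) y0).
  exists lo, hi'; split=> [| y' [<- | y'_in] y'_in_box]; try lra.
  by apply: y_iso => //; lra.
Qed.

Context {K : Type} (j : K -> R).

Fixpoint step_value (L : seq (entry Q)) (d : R) (a : K) (n : nat) : R :=
  if L is (lo, hi, m, v) :: L' then
    if Rlt_dec (q lo) (j a) && Rlt_dec (j a) (q hi) && (n == m) then q v
    else step_value L' d a n
  else d.

Definition step_fun (c : Q * seq (entry Q)) (x : XFk K) : R :=
  let: (c0, L) := c in
  if x is Some (a, n) then step_value L (q c0) a n else q c0.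

Lemma step_value_eventually_default (L : seq (entry Q)) (d : R) :
  exists M, forall a n, (M < n)%N -> step_value L d a n = d.
Proof.
elim: L => [|[[[lo hi] m] v] L [M LM]]; first by exists 0%N.
exists (maxn M m) => a n /=; rewrite gtn_max => /andP [M_n m_n].
by rewrite (gtn_eqF m_n) andbF; apply: LM.
Qed.

Hypothesis j_inj : injective j.

Lemma step_value_interpolates (g : XFk K -> R) (d : R) {eps : R} (S : list (XFk K)) :
  0 < eps -> exists L, forall a n, In (Some (a, n)) S ->
    Rabs (step_value L d a n - g (Some (a, n))) < eps.
Proof.
move=> eps_gt0; elim: S => [|[[a n]|] S [L L_g]]; first by exists [::].
  pose row (x : XFk K) := if x is Some (b, _) then j b else j a.
  have [lo [hi [ja_in ja_iso]]] := isolating_interval (j a) (map row S).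
  have [v v_g] := dense_approx (g (Some (a, n))) eps_gt0.
  exists ((lo, hi, n, v) :: L) => b m /= b_m_in.
  case: ifP => [/andP [/andP [/sumboolP lo_jb /sumboolP jb_hi] /eqP m_n] | off_box].
    have -> : b = a.
      case: b_m_in => [[-> //] | b_m_in]; apply: j_inj; apply: ja_iso; last by lra.
      exact: (in_map row S (Some (b, m))).
    by rewrite m_n.
  case: b_m_in off_box => [[a_b n_m] | /L_g L_bm _ //]; subst b m.
  rewrite eqxx andbT; case: (Rlt_dec (q lo) (j a)) => [lo_ja | ? _]; last lra.
  by case: (Rlt_dec (j a) (q hi)) => [ja_hi | ? _]; last lra.
by exists L => a n [// | /L_g].
Qed.

End DenseStepFunctions.

Arguments dense_approx {Q q} q_dense x {eps}.
Arguments step_value_interpolates {Q q} q_dense {K j} j_inj g d {eps} S.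

(* kappa is the cardinality of the type K: omega <= |K| <= c = |R|. *)
Theorem mainTheorem15 (F : (nat -> Prop) -> Prop) (K : Type)
  (hF : free_filter F)
  (hge : exists i : nat -> K, forall m n, i m = i n -> m = n)
  (hle : exists j : K -> R, forall a b, j a = j b -> a = b) :
  @Cp_XFk_separable K F.
Proof.
have [j j_inj] := hle.
pose code := (nat * nat * nat * seq (entry (nat * nat * nat)))%type.
pose D k := if @unpickle code k is Some c then step_fun frac j c else fun _ => 0.
exists D; split.
  move=> k; apply: eventually_constant_continuous hF _; rewrite /D.
  case: unpickle => [[c0 L] | ]; last by exists 0%N.
  exact: step_value_eventually_default.
move=> g _ S eps eps_gt0.
have [c0 c0_g] := dense_approx frac_dense (g None) eps_gt0.
have [L L_g] := step_value_interpolates frac_dense j_inj g (frac c0) S eps_gt0.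
exists (pickle ((c0, L) : code)).
by rewrite /D pickleK => -[[a n] | _] //=; apply: L_g.
Qed.
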